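(* For every integer $n \geq 9$, there exists a separating union-closed family $\mathcal{A}$ with base set $[n]$, height $h=5$ and $|\mathcal{B}(\mathcal{A})|=1$ such that \[\mathrm{Avg}(\mathcal{A}) = \frac{\sum_{A \in \mathcal{A}}|A|}{|\mathcal{A}|} < \frac{n}{2}.\]
   Context: A family of sets $\mathcal{A}$ is union-closed if it is a finite family of distinct finite sets with at least one nonempty member set, and $X,Y\in\mathcal{A}$ implies $X\cup Y\in\mathcal{A}$ (the empty set may be a member). For a family $\mathcal{F}$, $b(\mathcal{F})=\bigcup_{F\in\mathcal{F}}F$; the base set $b(\mathcal{A})$ is denoted $[n]=\{1,\dots,n\}$. $\mathcal{A}$ is separating if for any two distinct $x,y\in[n]$ there is $A\in\mathcal{A}$ containing exactly one of $x,y$. A chain in $\mathcal{A}$ is a subfamily any two distinct members of which are comparable under proper inclusion; the height $h$ of $\mathcal{A}$ is the maximum size of a chain in $\mathcal{A}$. For real $x\ge 0$, $\mathcal{A}_{<x}=\{A\in\mathcal{A} : |A|<x\}$. For $\mathcal{S}\subseteq\mathcal{A}$ and $S\in\mathcal{S}$, $\mathrm{irr}_{\mathcal{S}}(S)=\{s\in S : s\notin b(\mathcal{S}\setminus\{S\})\}$, and $\mathcal{S}$ is irredundant if $\mathrm{irr}_{\mathcal{S}}(S)\neq\emptyset$ for every $S\in\mathcal{S}$. Set $B=b(\mathcal{A}_{<n/2})$, and let $\mathcal{B}(\mathcal{A})$ denote any irredundant subfamily of $\mathcal{A}_{<n/2}$ of minimum size such that $b(\mathcal{B}(\mathcal{A}))=B$.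 *)

From mathcomp Require Import all_boot all_order all_algebra.
Set Implicit Arguments. Unset Strict Implicit. Unset Printing Implicit Defensive.
Import Order.TTheory GRing.Theory Num.Theory.

Section Fam.
Variable n : nat.
Local Notation fam := {set {set 'I_n}}.

Definition bfam (F : fam) : {set 'I_n} := \bigcup_(X in F) X.

Definition union_closed (A : fam) : Prop :=
  (exists2 X, X \in A & X != set0) /\
  (forall X Y, X \in A -> Y \in A -> X :|: Y \in A).

Definition separating (A : fam) : Prop :=
  forall x y : 'I_n, x != y -> exists2 X, X \in A & (x \in X) != (y \in X).

Definition is_chain (A C : fam) : Prop :=
  C \subset A /\
  (forall X Y, X \in C -> Y \in C -> X != Y -> (X \proper Y) || (Y \proper X)).

Definition height_eq (A : fam) (h : nat) : Prop :=
  (exists C, is_chain A C /\ #|C| = h) /\ (forall C, is_chain A C -> #|C| <= h).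

(* A_{<x} with x = n/2 : members of size < n/2, i.e. 2|X| < n *)
Definition small_part (A : fam) : fam := [set X in A | (#|X|).*2 < n].

Definition irr (S : fam) (X : {set 'I_n}) : {set 'I_n} := X :\: bfam (S :\ X).

Definition irredundant (S : fam) : Prop := forall X, X \in S -> irr S X != set0.

(* candidates for B(A): irredundant subfamilies of A_{<n/2} with union B = b(A_{<n/2}) *)
Definition B_candidate (A S : fam) : Prop :=
  [/\ S \subset small_part A, bfam S = bfam (small_part A) & irredundant S].

Definition B_size_eq (A : fam) (k : nat) : Prop :=
  (exists S, B_candidate A S /\ #|S| = k) /\
  (forall S, B_candidate A S -> k <= #|S|).

Definition avg (A : fam) : rat :=
  ((\sum_(X in A) #|X|)%:R / (#|A|)%:R)%R.

End Fam.

From mathcomp Require Import all_boot all_order all_algebra zify.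
Import Order.TTheory GRing.Theory Num.Theory.
Set Implicit Arguments. Unset Strict Implicit. Unset Printing Implicit Defensive.

(* Let m = (n-1)/2 (rounded down) and S = {0, ..., m-1}.  The family consists of
   the subsets of S of size at least m-2, together with [n] and the co-singletons
   [n] \ {z} for z > m.  The sets of size < n/2 are exactly those inside S, so
   B(A) = {S}.  Only the five sizes m-2, m-1, m, n-1, n occur, and initial segments
   of these sizes form a chain, so h = 5.  Finally the 'C(m, 2) sets of size m-2 lie
   well below n/2 and outweigh the roughly n/2 large sets, so Avg(A) < n/2. *)

Lemma big_setU_disjoint (R : Type) (idx : R) (op : Monoid.com_law idx)
    (I : finType) (A B : {set I}) (F : I -> R) :
  [disjoint A & B] ->
  \big[op/idx]_(i in A :|: B) F i = op (\big[op/idx]_(i in A) F i) (\big[op/idx]_(i in B) F i).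
Proof. by move=> AB; rewrite -bigU //; apply: eq_bigl => i; rewrite inE. Qed.

Section Layers.
Variable T : finType.
Implicit Types (S X Y : {set T}) (w : nat -> nat).

Definition layer S (k : nat) := [set X : {set T} | X \subset S & #|X| == k].
Definition layers_from S (k : nat) := [set X : {set T} | X \subset S & k <= #|X|].
Definition near_top S := [set X : {set T} | S \subset X & #|T|.-1 <= #|X|].

Lemma layers_fromS S k : layers_from S k = layer S k :|: layers_from S k.+1.
Proof. by apply/setP => X; rewrite !inE leq_eqVlt eq_sym andb_orr. Qed.

Lemma layers_from_eq0 S k : #|S| < k -> layers_from S k = set0.
Proof.
move=> Sk; apply/setP => X; rewrite !inE; apply/andP => -[/subset_leq_card XS kX].
by move: (leq_ltn_trans XS Sk); rewrite ltnNge kX.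
Qed.

Lemma layers_from_setU S k : {in layers_from S k &, forall X Y, X :|: Y \in layers_from S k}.
Proof.
move=> X Y; rewrite !inE subUset => /andP[XS kX] /andP[YS _]; rewrite XS YS.
exact: leq_trans kX (subset_leq_card (subsetUl X Y)).
Qed.

Lemma sum_layer S k w : \sum_(X in layer S k) w #|X| = 'C(#|S|, k) * w k.
Proof.
rewrite -cards_draws -sum_nat_const; apply: eq_bigr => X.
by rewrite inE => /andP[_ /eqP->].
Qed.

Lemma sum_layers_fromS S k w :
  \sum_(X in layers_from S k) w #|X| = 'C(#|S|, k) * w k + \sum_(X in layers_from S k.+1) w #|X|.
Proof.
rewrite layers_fromS big_setU_disjoint ?sum_layer //.
by rewrite disjoint_subset; apply/subsetP => X; rewrite !inE => /andP[_ /eqP->]; rewrite ltnn andbF.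
Qed.

Lemma near_top_up S X Y : X \in near_top S -> X \subset Y -> Y \in near_top S.
Proof.
rewrite !inE => /andP[SX X1] XY; rewrite (subset_trans SX XY).
exact: leq_trans X1 (subset_leq_card XY).
Qed.

Lemma near_topE S : near_top S = setT |: [set [set~ z] | z in ~: S].
Proof.
apply/setP => X; rewrite !inE; apply/andP/orP => [[SX X1]|[/eqP->|/imsetP[z]]].
- have [->|/negbTE XT] := eqVneq X setT; [by left|right].
  have /subsetPn[z _ zX] : ~~ (setT \subset X) by rewrite subTset XT.
  apply/imsetP; exists z; first by rewrite inE; apply: contra zX; apply: (subsetP SX).
  apply/eqP; rewrite eqEcard cardsC1 X1 andbT.
  by apply/subsetP => x xX; rewrite in_setC1; apply: contraNneq zX => <-.
- by rewrite subsetT cardsT leq_pred.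
- rewrite inE => zS ->; rewrite cardsC1; split=> //.
  by apply/subsetP => x xS; rewrite in_setC1; apply: contraNneq zS => <-.
Qed.

Lemma sum_near_top S w :
  \sum_(X in near_top S) w #|X| = w #|T| + #|~: S| * w #|T|.-1.
Proof.
rewrite near_topE big_setU1 /=; last first.
  by apply/imsetP => -[z _ /setP/(_ z)]; rewrite !inE eqxx.
rewrite cardsT big_imset /=; last by move=> x y _ _ /setC_inj/set1_inj.
by rewrite -sum_nat_const; congr (_ + _); apply: eq_bigr => z _; rewrite cardsC1.
Qed.

End Layers.

Section Families.
Variable n : nat.
Implicit Types (A C L U : {set {set 'I_n}}) (X Y : {set 'I_n}).

Definition prefix (k : nat) : {set 'I_n} := [set i : 'I_n | i < k].

Lemma card_prefix k : k <= n -> #|prefix k| = k.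
Proof.
move=> kn; have -> : prefix k = [set widen_ord kn i | i in 'I_k].
  apply/setP => j; rewrite inE; apply/idP/imsetP => [jk | [i _ ->]].
    by exists (Ordinal jk) => //; apply: val_inj.
  exact: (ltn_ord i).
by rewrite card_imset ?card_ord // => i j /(congr1 val) eq_ij; apply: val_inj.
Qed.

Lemma prefix_subset a b : a <= b -> prefix a \subset prefix b.
Proof. by move=> ab; apply/subsetP => i; rewrite !inE => /leq_trans; apply. Qed.

Lemma chain_card_le A C (s : seq nat) :
  {in A, forall X, #|X| \in s} -> is_chain A C -> #|C| <= size s.
Proof.
move=> As [CA Cch]; rewrite cardE -(size_map (fun X => #|X|)).
apply: uniq_leq_size => [|_ /mapP[X XC ->]].
  rewrite map_inj_in_uniq ?enum_uniq // => X Y; rewrite !mem_enum => XC YC XY.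
  apply/eqP/negPn/negP => neXY.
  by have := Cch X Y XC YC neXY; rewrite !properEcard XY ltnn !andbF.
by apply: As; rewrite mem_enum in XC; apply: (subsetP CA).
Qed.

Lemma prefixes_chain A ks :
  {in ks, forall k, prefix k \in A} -> is_chain A [set X in map prefix ks].
Proof.
move=> ksA; split=> [|X Y].
  by apply/subsetP => X; rewrite inE => /mapP[k /ksA kA ->].
rewrite !inE => /mapP[a _ ->] /mapP[b _ ->] neab.
rewrite !properEneq neab eq_sym neab /=.
by case: (leqP a b) => [/prefix_subset -> | /ltnW/prefix_subset ->]; rewrite ?orbT.
Qed.

Lemma card_prefixes ks :
  uniq ks -> all (fun k => k <= n) ks -> #|[set X in map prefix ks]| = size ks.
Proof.
move=> ks_uniq /allP ks_n; rewrite cardsE -(size_map prefix); apply/card_uniqP.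
rewrite map_inj_in_uniq // => a b /ks_n an /ks_n bn /(congr1 (fun X => #|X|)).
by rewrite !card_prefix.
Qed.

Lemma height_eq_prefixes A ks :
    uniq ks -> all (fun k => k <= n) ks -> {in ks, forall k, prefix k \in A} ->
  {in A, forall X, #|X| \in ks} -> height_eq A (size ks).
Proof.
move=> ks_uniq ks_n ksA As; split; last by move=> C; apply: chain_card_le.
by exists [set X in map prefix ks]; rewrite card_prefixes //; split; first exact: prefixes_chain.
Qed.

Lemma B_size_eq1 A S :
    S \in small_part A -> S != set0 -> {in small_part A, forall X, X \subset S} ->
  B_size_eq A 1.
Proof.
move=> SA S_neq0 S_max.
have bS : bfam (small_part A) = S.
  by apply/eqP; rewrite eqEsubset (bigcup_max _ SA) // andbT; apply/bigcupsP.
split=> [|S' [_ bS' _]].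
  exists [set S]; split; last exact: cards1.
  split; [by rewrite sub1set | by rewrite bS /bfam big_set1 |].
  by move=> X /set1P->; rewrite /irr setDv /bfam big_set0 setD0.
rewrite card_gt0; apply: contraNneq S_neq0 => S'0.
by rewrite -bS -bS' S'0 /bfam big_set0.
Qed.

Lemma union_closed_setU L U :
    {in L &, forall X Y, X :|: Y \in L} -> {in U, forall X, forall Y, X \subset Y -> Y \in U} ->
  {in L :|: U &, forall X Y, X :|: Y \in L :|: U}.
Proof.
move=> Lcl Uup X Y; rewrite !inE.
case/orP=> [XL|XU] /orP[YL|YU]; first by rewrite Lcl.
- by rewrite (Uup Y) ?subsetUr ?orbT.
- by rewrite (Uup X) ?subsetUl ?orbT.
- by rewrite (Uup X) ?subsetUl ?orbT.
Qed.

Lemma avg_lt_half A :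
  (\sum_(X in A) #|X|) * 2 < n * #|A| -> (avg A < n%:R / 2%:R)%R.
Proof.
move=> lt_sum; have A_gt0 : 0 < #|A| by move: lt_sum; case: #|A| => //; rewrite muln0.
rewrite /avg ltr_pdivrMr ?ltr0n // mulrAC ltr_pdivlMr ?ltr0n //.
by rewrite -!natrM ltr_nat.
Qed.

End Families.

Lemma fam_avg_arith m n : 4 <= m -> n.-1./2 = m ->
  ('C(m, 2) * (m - 2) + m * m.-1 + m + (n + (n - m.+1) * n.-1)) * 2
    < n * ('C(m, 2) + m + 1 + (1 + (n - m.+1))).
Proof.
move=> m_ge4 nm; have c2 : 'C(m, 2).*2 = m * m.-1.
  by rewrite -mul2n -(mul_bin_diag m 1) bin1.
have [b [b_le1 ->]] : exists b, b <= 1 /\ n = m.*2 + b.+1.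
  by exists (odd n.-1); rewrite -nm; move: (odd_double_half n.-1); case: (odd _) => /=; lia.
move: c2; have [k ->] : exists k, m = k + 4 by exists (m - 4); lia.
move: 'C(_, 2) => c.
have -> : (k + 4).*2 + b.+1 - (k + 4).+1 = k + 4 + b by lia.
have -> : k + 4 - 2 = k + 2 by lia.
have -> : (k + 4).-1 = k + 3 by lia.
have -> : ((k + 4).*2 + b.+1).-1 = (k + 4).*2 + b by lia.
(* doubling makes [c2] usable to replace [c] by a polynomial in [k] *)
rewrite -(ltn_pmul2l (_ : 0 < 2)) //.
by case: b b_le1 => [|[|//]] _ c2; nia.
Qed.

Section Construction.
Variable n : nat.
Hypothesis n_ge9 : 9 <= n.
Local Notation m := n.-1./2.

Lemma m_ge4 : 4 <= m.
Proof. by move: (odd_double_half n.-1); lia. Qed.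

Lemma double_m_lt : m.*2 < n.
Proof. by move: (odd_double_half n.-1); lia. Qed.

Lemma card_prefix_m : #|prefix n m| = m.
Proof. by rewrite card_prefix //; move: double_m_lt; lia. Qed.

Definition fam_low := layers_from (prefix n m) (m - 2).
Definition fam_high := near_top (prefix n m.+1).
Definition fam := fam_low :|: fam_high.

Lemma card_fam_low X : X \in fam_low -> m - 2 <= #|X| <= m.
Proof.
by rewrite inE => /andP[/subset_leq_card]; rewrite card_prefix_m => -> ->.
Qed.

Lemma card_fam_high X : X \in fam_high -> n.-1 <= #|X| <= n.
Proof.
by rewrite inE card_ord => /andP[_ ->]; rewrite -[n in _ <= n]card_ord max_card.
Qed.

Lemma setT_fam_high : setT \in fam_high.
Proof. by rewrite inE subsetT cardsT leq_pred. Qed.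

Lemma fam_union_closed : union_closed fam.
Proof.
split; last by apply: union_closed_setU => [|X /near_top_up]; first exact: layers_from_setU.
exists setT; first by rewrite /fam in_setU setT_fam_high orbT.
by rewrite -card_gt0 cardsT card_ord; lia.
Qed.

Lemma fam_cover : bfam fam = setT.
Proof.
apply/eqP; rewrite eqEsubset subsetT /=.
by apply: (bigcup_max setT) => //; rewrite /fam in_setU setT_fam_high orbT.
Qed.

Lemma fam_separating : separating fam.
Proof.
move=> x y; wlog xy : x y / x < y.
  move=> sep ne; case: (ltngtP x y) => [xy|yx|/val_inj exy].
  - exact: sep.
  - by have [|X XA sepX] := sep y x yx; [rewrite eq_sym | exists X; rewrite // eq_sym].
  - by rewrite exy eqxx in ne.
move=> ne; case: (ltnP y m) => ym.
  exists (prefix n m :\ y); last by rewrite !inE eqxx ne (ltn_trans xy ym).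
  apply/setUP; left; rewrite inE subD1set /= -(leq_add2l (y \in prefix n m)) -cardsD1.
  by rewrite card_prefix_m inE ym /=; move: m_ge4; lia.
case: (ltnP x m) => xm.
  exists (prefix n m); last by rewrite !inE xm ltnNge ym.
  by apply/setUP; left; rewrite inE subxx card_prefix_m leq_subr.
exists [set~ y]; last by rewrite !inE eqxx ne.
apply/setUP; right; rewrite inE cardsC1 leqnn andbT; apply/subsetP => i; rewrite !inE.
by apply: contraTneq => ->; rewrite -leqNgt (leq_ltn_trans xm xy).
Qed.

Lemma fam_height : height_eq fam 5.
Proof.
have [m4 mn] := (m_ge4, double_m_lt).
apply: (@height_eq_prefixes _ _ [:: m - 2; m - 1; m; n.-1; n]) => /=.
- by rewrite !inE; lia.
- lia.
- move=> k k_ks; have kn : k <= n by move: k_ks; rewrite !inE; lia.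
  case: (leqP k m) => km; apply/setUP; [left | right];
    by rewrite inE ?card_ord card_prefix // prefix_subset //=; move: k_ks; rewrite !inE; lia.
- have ks_sizes k : m - 2 <= k <= m \/ n.-1 <= k <= n -> k \in [:: m - 2; m - 1; m; n.-1; n].
    by rewrite !inE; lia.
  by move=> X /setUP[/card_fam_low|/card_fam_high] X_size; apply: ks_sizes; [left | right].
Qed.

Lemma small_part_fam : small_part fam = fam_low.
Proof.
apply/setP => X; rewrite inE in_setU andb_orl.
have low_small : X \in fam_low -> #|X|.*2 < n.
  move=> /card_fam_low /andP[_ X_le]; rewrite -leq_double in X_le.
  exact: leq_ltn_trans X_le double_m_lt.
have high_large : X \in fam_high -> n <= #|X|.*2.
  move=> /card_fam_high /andP[X_ge _]; rewrite -leq_double in X_ge.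
  by apply: leq_trans X_ge; lia.
case: (boolP (X \in fam_low)) => [/low_small -> // | _] /=.
by case: (boolP (X \in fam_high)) => [/high_large | _] //=; rewrite ltnNge => ->.
Qed.

Lemma fam_B_size : B_size_eq fam 1.
Proof.
apply: (@B_size_eq1 _ _ (prefix n m)); rewrite ?small_part_fam.
- by rewrite inE subxx card_prefix_m leq_subr.
- by rewrite -card_gt0 card_prefix_m; move: m_ge4; lia.
- by move=> X; rewrite inE => /andP[].
Qed.

Lemma sum_fam w :
  \sum_(X in fam) w #|X| =
    'C(m, 2) * w (m - 2) + m * w m.-1 + w m + (w n + (n - m.+1) * w n.-1).
Proof.
have [m4 mn] := (m_ge4, double_m_lt).
rewrite big_setU_disjoint; last first.
  rewrite disjoint_subset; apply/subsetP => X /card_fam_low /andP[_ X_le].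
  rewrite inE; apply/negP => /card_fam_high /andP[X_ge _].
  by have := leq_trans X_ge X_le; lia.
rewrite /= /fam_low 3!sum_layers_fromS layers_from_eq0 ?big_set0 ?addn0 card_prefix_m; last by lia.
rewrite sum_near_top card_ord.
have -> : #|~: prefix n m.+1| = n - m.+1.
  by apply/eqP; rewrite -(eqn_add2l #|prefix n m.+1|) cardsC card_ord card_prefix //; lia.
have -> : (m - 2).+1 = m - 1 by lia.
have -> : (m - 1).+1 = m by lia.
by rewrite !bin_sub ?bin1 ?binn ?muln1 ?subn1 //; lia.
Qed.

Lemma fam_avg : (avg fam < n%:R / 2%:R)%R.
Proof.
apply: avg_lt_half; rewrite -sum1_card (sum_fam id) (sum_fam (fun=> 1)) !muln1.
exact: fam_avg_arith m_ge4 _.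
Qed.

End Construction.

Theorem lemma3p1 : forall n : nat, 9 <= n ->
  exists A : {set {set 'I_n}},
    [/\ union_closed A, bfam A = [set: 'I_n], separating A,
        height_eq A 5
      & B_size_eq A 1 /\ (avg A < (n%:R / 2%:R)%R)%R].
Proof.
move=> n n_ge9; exists (fam n); split.
- exact: fam_union_closed.
- exact: fam_cover.
- exact: fam_separating.
- exact: fam_height.
- by split; [exact: fam_B_size | exact: fam_avg].
Qed.
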